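(* Let $h:\{0,1\}^n\to\{\pm1\}$ be such that $(1-h)/2$ is monotone. Then for every $0\le r\le n-1$, $\mu(h|_{r+1})\ge\mu(h|_r)+\frac1n\mathbf I[h|_r]$, and consequently $\frac1n\sum_{r=0}^{n-1}\mathbf I[h|_r]\le\mu(h|_n)-\mu(h|_0)\le1$.
   Context: A function $g:\{0,1\}^n\to\{0,1\}$ is monotone if $x\preceq y$ coordinatewise implies $g(x)\le g(y)$. For $0\le r\le n$, $\binom{[n]}{r}=\{x\in\{0,1\}^n:\sum_ix_i=r\}$ with the uniform distribution; $h|_r$ is the restriction of $h$ to it, and $\mu(h|_r)=|\{x\in\binom{[n]}{r}:h(x)=-1\}|/\binom nr$. For $g:\binom{[n]}{r}\to\{\pm1\}$, $\mathbf I_{ij}[g]=2\Pr_x[g(x^{(i,j)})\ne g(x)]$ with $x^{(i,j)}$ obtained by swapping coordinates $i,j$, and $\mathbf I[g]=\frac1n\sum_{1\le i<j\le n}\mathbf I_{ij}[g]$. *)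

From mathcomp Require Import all_boot all_order all_algebra.
From mathcomp Require Import fingroup perm.
Set Implicit Arguments. Unset Strict Implicit. Unset Printing Implicit Defensive.
Import Order.TTheory GRing.Theory Num.Theory.

(* Points of {0,1}^n are finite functions 'I_n -> bool (true = 1). *)
Definition cube (n : nat) := {ffun 'I_n -> bool}.

Definition weight n (x : cube n) : nat := \sum_(i < n) (x i : nat).

Definition cube_le n (x y : cube n) : Prop := forall i, x i <= y i.

Definition monotone_bool n (g : cube n -> bool) : Prop :=
  forall x y, cube_le x y -> g x <= g y.

Definition pm1_valued n (h : cube n -> int) : Prop :=
  forall x, h x = 1%R \/ h x = (-1)%R.

(* (1-h)/2 as a {0,1}-valued function: 1 iff h x = -1 *)
Definition half_one_minus n (h : cube n -> int) : cube n -> bool :=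
  fun x => h x == (-1)%R.

Definition mu_slice n (h : cube n -> int) (r : nat) : rat :=
  (#|[set x : cube n | (weight x == r) && (h x == (-1)%R)]|%:R / 'C(n, r)%:R)%R.

Definition swapc n (x : cube n) (i j : 'I_n) : cube n :=
  [ffun k => x (tperm i j k)].

Definition infl_ij n (h : cube n -> int) (r : nat) (i j : 'I_n) : rat :=
  (2 * (#|[set x : cube n | (weight x == r) && (h (swapc x i j) != h x)]|%:R
        / 'C(n, r)%:R))%R.

Definition infl_slice n (h : cube n -> int) (r : nat) : rat :=
  ((n%:R)^-1 * \sum_(i < n) \sum_(j < n | (i < j)%N) infl_ij h r i j)%R.

From mathcomp Require Import all_boot all_order all_algebra.
From mathcomp Require Import fingroup perm.
From mathcomp Require Import zify ring.
Import Order.TTheory GRing.Theory Num.Theory.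
Set Implicit Arguments. Unset Strict Implicit.

(* Let a = (1 - h)/2, an up-set of {0,1}^n, and let S_r be the number of
   points of a in the slice of weight r.
   1. Edge counting (edge_count): the edges (y - e_i, y) between slices r
      and r+1 starting in a all end in a, so (r+1) S_{r+1} = (n-r) S_r + B_r,
      where B_r counts the boundary edges, those with a y but not a (y - e_i).
      Dividing by binomials, mu_{r+1} = mu_r + B_r / ((n-r) C(n,r)).
   2. Swaps versus boundary (swap_total_le): if x has x_i = 1, x_j = 0 and
      a disagrees on x and its (i j)-swap, then y = x + e_j is in a and one
      of (y, i), (y, j) is a boundary edge; each boundary edge (y, i) arises
      from the r coordinates j != i with y_j = 1, so the total swap count
      C_r = sum_{i<j} #{x : a changes under (i j)} is at most 2 r B_r.
   3. Since 4 r (n-r) <= n^2, the normalised influence n^-1 I[h|_r] =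
      2 C_r / (n^2 C(n,r)) is at most B_r / ((n-r) C(n,r)) (influence_le_gain).
   The main theorem follows slice by slice, then by telescoping, using that
   the top slice is the single point (1, ..., 1).
   Counting is done in nat, with booleans read as 0/1 indicators. *)

Section CubeSurgery.
Variable n : nat.
Implicit Types (x y : cube n) (i j : 'I_n) (b : bool).

Definition set_coord x j b : cube n := [ffun k => if k == j then b else x k].

Lemma set_coordE x j b k : set_coord x j b k = if k == j then b else x k.
Proof. by rewrite ffunE. Qed.

Lemma set_coord_id x j : set_coord x j (x j) = x.
Proof. by apply/ffunP=> k; rewrite set_coordE; case: eqP => [->|]. Qed.

Lemma set_coord2 x j b b' : set_coord (set_coord x j b) j b' = set_coord x j b'.
Proof. by apply/ffunP=> k; rewrite !set_coordE; case: eqP. Qed.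

Lemma weight_set_coord x j b : weight (set_coord x j b) + x j = weight x + b.
Proof.
rewrite /weight (bigD1 j) //= [in RHS](bigD1 j) //= set_coordE eqxx.
under eq_bigr => k /negbTE nkj do rewrite set_coordE nkj.
lia.
Qed.

Lemma weight_lower x j r : x j ->
  (weight (set_coord x j false) == r) = (weight x == r.+1).
Proof.
move=> xj; have := weight_set_coord x j false; rewrite xj addn1 addn0 => <-.
by rewrite eqSS.
Qed.

Lemma cube_le_lower x j : cube_le (set_coord x j false) x.
Proof. by move=> k; rewrite set_coordE; case: eqP => //; case: (x k). Qed.

Lemma sum_lower j (F : cube n -> nat) :
  \sum_(x : cube n) (~~ x j) * F x = \sum_(y : cube n) (y j) * F (set_coord y j false).
Proof.
pose flip x := set_coord x j (~~ x j).
have flipK : involutive flip.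
  by move=> x; rewrite /flip set_coord2 set_coordE eqxx negbK set_coord_id.
rewrite (reindex_inj (inv_inj flipK)) /=; apply: eq_bigr => x _.
by rewrite /flip set_coordE eqxx negbK; case: (x j).
Qed.

Lemma weight_complement x : \sum_i (~~ x i : nat) = n - weight x.
Proof.
have sum_bits : \sum_i (~~ x i : nat) + weight x = n.
  rewrite /weight -big_split /= -[in RHS](card_ord n) -sum1_card.
  by apply: eq_bigr => i _; case: (x i).
by move: sum_bits; lia.
Qed.

Lemma weight_full x : weight x = n -> x = [ffun => true].
Proof.
move=> wx; have /eqP := weight_complement x; rewrite wx subnn sum_nat_eq0.
by move=> /forallP x1; apply/ffunP => i; rewrite ffunE; move: (x1 i); case: (x i).
Qed.

Lemma weight_others y i : \sum_j (i != j) * y j + y i = weight y.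
Proof.
rewrite /weight [RHS](bigD1 i) //= addnC; congr (_ + _).
rewrite [RHS]big_mkcond; apply: eq_bigr => j _.
by rewrite eq_sym; case: (j == i); rewrite ?mul1n ?mul0n.
Qed.

Lemma swapcC x i j : swapc x j i = swapc x i j.
Proof. by rewrite /swapc tpermC. Qed.

Lemma swapc_id x i j : x i = x j -> swapc x i j = x.
Proof. by move=> e; apply/ffunP=> k; rewrite ffunE; case: tpermP => [->|->|]. Qed.

Lemma swapc_lower y i j : i != j -> y i -> y j ->
  swapc (set_coord y j false) i j = set_coord y i false.
Proof.
move=> nij yi yj; apply/ffunP=> k; rewrite ffunE !set_coordE.
case: tpermP => [->|->|/eqP nki /eqP nkj]; rewrite ?eqxx //.
- by rewrite (negbTE nij) eq_sym (negbTE nij) yi yj.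
- by rewrite (negbTE nki) (negbTE nkj).
Qed.

End CubeSurgery.

Lemma card_set_sum (T : finType) (P : pred T) : #|[set x | P x]| = \sum_x (P x : nat).
Proof. by rewrite -sum1_card big_mkcond; apply: eq_bigr => x _; rewrite inE. Qed.

(* Summing F i j + F j i over the pairs i < j sees each ordered pair of
   distinct indices once. *)
Lemma sum_pairs_le n (F : 'I_n -> 'I_n -> nat) :
  \sum_(i < n) \sum_(j < n | (i < j)%N) (F i j + F j i) <= \sum_(i < n) \sum_(j < n) F i j.
Proof.
under eq_bigr => i _ do rewrite big_split.
rewrite big_split /= [X in _ + X](exchange_big_dep xpredT) //= -big_split /=.
apply: leq_sum => i _.
rewrite [X in X + _]big_mkcond [X in _ + X]big_mkcond -big_split /=.
apply: leq_sum => j _; case: ltngtP => /= _; rewrite ?addn0 ?add0n //.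
Qed.

Section MonotoneSlices.
Variables (n : nat) (a : cube n -> bool).
Hypothesis a_mono : monotone_bool a.
Implicit Types (r s : nat) (i j : 'I_n).

Definition slice_count s : nat := \sum_(x : cube n) (weight x == s) * a x.

Definition boundary_edge r (y : cube n) i : bool :=
  [&& weight y == r.+1, y i, a y & ~~ a (set_coord y i false)].

Definition boundary_count r : nat := \sum_i \sum_(y : cube n) boundary_edge r y i.

(* Counting the pairs (x, i) with x_i = 1 by points: each x in slice r
   has r of them. *)
Lemma slice_count_ones r :
  \sum_i \sum_(x : cube n) (weight x == r) * x i * a x = r * slice_count r.
Proof.
rewrite exchange_big big_distrr /=; apply: eq_bigr => x _.
under eq_bigr => i _ do rewrite mulnAC.
rewrite -big_distrr /= -/(weight x).
by case: eqP => [->|]; rewrite ?mul0n ?muln0 // mul1n mulnC.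
Qed.

(* Likewise each x in slice r has n - r coordinates equal to 0. *)
Lemma slice_count_zeros r :
  \sum_i \sum_(x : cube n) (weight x == r) * ~~ x i * a x = (n - r) * slice_count r.
Proof.
rewrite exchange_big big_distrr /=; apply: eq_bigr => x _.
under eq_bigr => i _ do rewrite mulnAC.
rewrite -big_distrr /= weight_complement.
by case: eqP => [->|]; rewrite ?mul0n ?muln0 // mul1n mulnC.
Qed.

(* Double counting the edges between slices r and r.+1 that start in a:
   since a is an up-set, every such edge ends in a, and the remaining edges
   ending in a are exactly the boundary edges. *)
Lemma edge_count r :
  r.+1 * slice_count r.+1 = (n - r) * slice_count r + boundary_count r.
Proof.
rewrite -slice_count_ones -slice_count_zeros /boundary_count -big_split.
apply: eq_bigr => i _ /=.
under [X in _ = X + _]eq_bigr => x _ do rewrite mulnAC mulnC.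
rewrite sum_lower -big_split; apply: eq_bigr => y _ /=.
rewrite /boundary_edge; case yi: (y i); rewrite ?muln0 ?mul0n ?andbF //= weight_lower //.
have := a_mono (cube_le_lower y i).
by case: (weight y == r.+1) (a y) (a (set_coord y i false)) => [] [] [].
Qed.

Definition swap_count r i j : nat :=
  \sum_(x : cube n) (weight x == r) * (a (swapc x i j) != a x).

Definition directed_swap_count r i j : nat :=
  \sum_(x : cube n) (weight x == r) * x i * ~~ x j * (a (swapc x i j) != a x).

Definition pair_boundary_count r i j : nat :=
  \sum_(y : cube n) (i != j) * y j * boundary_edge r y i.

(* A swap of two equal coordinates is the identity, so only x_i != x_j
   contributes. *)
Lemma swap_count_split r i j :
  swap_count r i j = directed_swap_count r i j + directed_swap_count r j i.
Proof.
rewrite /swap_count /directed_swap_count -big_split; apply: eq_bigr => x _ /=.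
rewrite (swapcC x j i); case: (weight x == r); rewrite ?mul0n //.
case xi: (x i); case xj: (x j); rewrite /= ?muln0 ?mul0n ?addn0 //.
all: by rewrite swapc_id ?xi ?xj // eqxx.
Qed.

(* The key use of monotonicity: if x (with x_i = 1, x_j = 0) and its swap
   disagree, then y = x + e_j lies in a and one of y - e_i, y - e_j does not,
   so (y, i) or (y, j) is a boundary edge. *)
Lemma directed_swap_le r i j :
  directed_swap_count r i j <= pair_boundary_count r i j + pair_boundary_count r j i.
Proof.
rewrite /directed_swap_count /pair_boundary_count.
under eq_bigr => x _ do rewrite mulnAC mulnC.
rewrite sum_lower -big_split; apply: leq_sum => y _ /=.
case yj: (y j); rewrite ?mul0n //.
case: (eqVneq i j) => [<-|nij]; first by rewrite set_coordE eqxx /= !(muln0, mul0n).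
rewrite set_coordE (negbTE nij) /boundary_edge.
case yi: (y i); rewrite ?muln0 ?mul0n //.
rewrite weight_lower // swapc_lower // yj /=.
have := a_mono (cube_le_lower y i); have := a_mono (cube_le_lower y j).
by case: (weight y == r.+1) (a y) (a (set_coord y i false)) (a (set_coord y j false))
  => [] [] [] [].
Qed.

(* Every boundary edge (y, i) has exactly r further coordinates j with y_j = 1. *)
Lemma pair_boundary_total r :
  \sum_i \sum_j pair_boundary_count r i j = r * boundary_count r.
Proof.
rewrite /boundary_count big_distrr; apply: eq_bigr => i _ /=.
rewrite /pair_boundary_count exchange_big big_distrr /=; apply: eq_bigr => y _.
rewrite -big_distrl /=.
have := weight_others y i; rewrite /boundary_edge.
case: (weight y =P r.+1) (y i) => [-> [] /eqP|_ []]; rewrite ?andbF ?muln0 //=.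
by rewrite addn1 eqSS => /eqP ->; rewrite mulnC.
Qed.

Lemma swap_total_le r :
  \sum_(i < n) \sum_(j < n | (i < j)%N) swap_count r i j <= 2 * r * boundary_count r.
Proof.
under eq_bigr => i _ do under eq_bigr => j _ do rewrite swap_count_split.
apply: leq_trans (sum_pairs_le _) _.
have -> : 2 * r * boundary_count r =
    \sum_i \sum_j (pair_boundary_count r i j + pair_boundary_count r j i).
  under eq_bigr => i _ do rewrite big_split.
  by rewrite big_split /= [X in _ + X]exchange_big addnn -mul2n pair_boundary_total mulnA.
by apply: leq_sum => i _; apply: leq_sum => j _; apply: directed_swap_le.
Qed.

End MonotoneSlices.

Section SliceDensities.
Local Open Scope ring_scope.
Variable R : numFieldType.
Variables n r : nat.
Hypothesis r_lt_n : (r < n)%N.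

Let binom_neq0 : 'C(n, r)%:R != 0 :> R.
Proof. by rewrite pnatr_eq0 -lt0n bin_gt0 ltnW. Qed.

Let gap_neq0 : (n - r)%:R != 0 :> R.
Proof. by rewrite pnatr_eq0 subn_eq0 -ltnNge. Qed.

Let n_neq0 : n%:R != 0 :> R.
Proof. by rewrite pnatr_eq0 -lt0n (leq_ltn_trans _ r_lt_n). Qed.

(* With r.+1 'C(n, r.+1) = (n - r) 'C(n, r), the edge counting identity
   becomes a relation between the densities of consecutive slices. *)
Lemma density_step S S' B : (r.+1 * S' = (n - r) * S + B)%N ->
  S'%:R / 'C(n, r.+1)%:R = S%:R / 'C(n, r)%:R + B%:R / ((n - r) * 'C(n, r))%:R :> R.
Proof.
move=> edges.
have -> : S'%:R / 'C(n, r.+1)%:R = (r.+1 * S')%:R / (r.+1 * 'C(n, r.+1))%:R :> R.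
  by rewrite !natrM -mulf_div divff ?mul1r // pnatr_eq0.
by rewrite edges mul_bin_left natrD mulrDl !natrM -mulf_div divff ?mul1r.
Qed.

(* Since 4 r (n - r) <= n ^ 2, a swap count C <= 2 r B, normalised as in
   the influence, is dominated by the density gain of density_step. *)
Lemma influence_le_gain B C : (C <= 2 * r * B)%N ->
  n%:R^-1 * (n%:R^-1 * ((2 * C)%:R / 'C(n, r)%:R))
    <= B%:R / ((n - r) * 'C(n, r))%:R :> R.
Proof.
move=> swaps.
have amgm : (4 * (r * (n - r)) <= n ^ 2)%N.
  have := nat_AGM2 r (n - r); rewrite subnKC; last exact: ltnW.
  by move=> [le _].
have cross : (2 * C * (n - r) <= n ^ 2 * B)%N.
  apply: (@leq_trans (4 * (r * (n - r)) * B)); last exact: leq_mul.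
  apply: (@leq_trans (2 * (2 * r * B) * (n - r))).
    by rewrite leq_mul2r leq_mul2l swaps !orbT.
  by apply: eq_leq; ring.
pose D : R := (n ^ 2 * (n - r) * 'C(n, r))%:R.
have -> : n%:R^-1 * (n%:R^-1 * ((2 * C)%:R / 'C(n, r)%:R)) = (2 * C * (n - r))%:R / D.
  by rewrite /D !natrM ?natrX; field; rewrite n_neq0 gap_neq0 binom_neq0.
have -> : B%:R / ((n - r) * 'C(n, r))%:R = (n ^ 2 * B)%:R / D.
  by rewrite /D !natrM ?natrX; field; rewrite n_neq0 gap_neq0 binom_neq0.
by rewrite ler_wpM2r ?invr_ge0 ?ler0n ?ler_nat.
Qed.

End SliceDensities.

Section BooleanForm.
Local Open Scope ring_scope.
Variables (n : nat) (h : cube n -> int).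

Lemma pm1_neq : pm1_valued h -> forall u v,
  (h u != h v) = (half_one_minus h u != half_one_minus h v).
Proof. by move=> pm u v; rewrite /half_one_minus; case: (pm u) => ->; case: (pm v) => ->. Qed.

Lemma mu_sliceE s :
  mu_slice h s = (slice_count (half_one_minus h) s)%:R / 'C(n, s)%:R.
Proof.
rewrite /mu_slice card_set_sum; congr (_%:R / _).
rewrite /slice_count /half_one_minus; apply: eq_bigr => x _.
by case: (weight x == s); rewrite ?mul1n.
Qed.

Lemma infl_sliceE r : pm1_valued h ->
  infl_slice h r = n%:R^-1 *
    ((2 * \sum_(i < n) \sum_(j < n | (i < j)%N) swap_count (half_one_minus h) r i j)%:R
       / 'C(n, r)%:R).
Proof.
move=> pm; rewrite /infl_slice; congr (_ * _).
rewrite natrM natr_sum mulr_sumr mulr_suml; apply: eq_bigr => i _.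
rewrite natr_sum mulr_sumr mulr_suml; apply: eq_bigr => j _.
rewrite /infl_ij mulrA card_set_sum; congr (_ * _%:R / _).
by apply: eq_bigr => x _; rewrite (pm1_neq pm); case: (weight x == r); rewrite ?mul1n.
Qed.

Lemma slice_gain r : pm1_valued h -> monotone_bool (half_one_minus h) -> (r < n)%N ->
  mu_slice h r + n%:R^-1 * infl_slice h r <= mu_slice h r.+1.
Proof.
move=> pm mono r_lt_n.
rewrite !mu_sliceE (infl_sliceE _ pm) (density_step _ r_lt_n (edge_count mono r)) lerD2l.
exact: (influence_le_gain _ r_lt_n (swap_total_le mono r)).
Qed.

(* The top slice is the single point (1, ..., 1). *)
Lemma top_density_le1 : mu_slice h n <= 1.
Proof.
rewrite /mu_slice binn divr1.
suff top : (#|[set x : cube n | (weight x == n) && (h x == (-1)%R)]| <= 1)%N.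
  by rewrite -(@ler_nat rat) in top.
rewrite -(cards1 ([ffun=> true] : cube n)); apply: subset_leq_card; apply/subsetP => x.
by rewrite !inE => /andP[/eqP /weight_full -> _].
Qed.

Lemma mu_slice_ge0 s : 0 <= mu_slice h s.
Proof. by rewrite divr_ge0 ?ler0n. Qed.

End BooleanForm.

Unset Implicit Arguments.

Theorem mainTheorem6 (n : nat) (h : cube n -> int) :
  pm1_valued h ->
  monotone_bool (half_one_minus h) ->
  (forall r : nat, (r < n)%N ->
     (mu_slice h r.+1 >= mu_slice h r + (n%:R)^-1 * infl_slice h r)%R) /\
  ((n%:R)^-1 * \sum_(0 <= r < n) infl_slice h r <= mu_slice h n - mu_slice h 0
   <= 1)%R.
Proof.
move=> pm mono; split=> [r r_lt_n|]; first exact: slice_gain.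
apply/andP; split.
- rewrite -(telescope_sumr _ (leq0n n)) mulr_sumr.
  apply: ler_sum_nat => r /andP[_ r_lt_n].
  by rewrite lerBrDr addrC slice_gain.
- by rewrite lerBlDr (le_trans (top_density_le1 h)) // lerDl mu_slice_ge0.
Qed.
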